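(* For every nondeterministic multihead finite automaton $\mathcal M$ with input alphabet $\Sigma$ there is an interpretation $\pi:\Gamma_2\to\Sigma$ such that for every sufficiently long string $x\in\Sigma^\star$, the structure $x^\pi$ is isomorphic to the configuration graph of $\mathcal M$ on input $x$ (as a 2-pointed directed graph). Furthermore, $\pi$ can be expanded to an interpretation $\pi:(\Gamma_2,S)\to\Sigma$ such that $x^\pi$ is a successor expansion of that configuration graph. Moreover, $\pi$ can be taken quantifier-free.
   Context: A nondeterministic multihead finite automaton (NMFA) consists of a finite set $Q$ of states, a number $k$ of heads, an input alphabet $\Sigma$, a start state $q_0$, an accept state $q_f$, and a transition relation $\delta$ which, depending on the current state and the $k$-tuple of symbols in $\Sigma\cup\{\triangleright,\triangleleft\}$ read by the heads, allows a new state and a move vector in $\{-1,0,1\}^k$. The tape holds the input string between a left endmarker $\triangleright$ and a right endmarker $\triangleleft$; heads cannot write; a head reading $\triangleright$ (resp. $\triangleleft$) never moves left (resp. right); in state $q_f$ the transitions move every head left if possible and otherwise keep it in place. A configuration on input $x$ consists of the current state and the positions of the heads. The configuration graph on input $x$ is the 2-pointed directed graph whose vertices are the configurations on $x$, with an edge from $c$ to $c'$ iff $c'$ is reachable from $c$ in one step, and whose distinguished vertices $s,t$ are the initial configuration (state $q_0$, all heads at the left) and the final configuration (state $q_f$, all heads at the left). A string $x=x_0\cdots x_{n-1}\in\Sigma^\star$ is viewed as the structure with domain $\{0,\dots,n-1\}$, a unary predicate for each $\sigma\in\Sigma$ holding at $i$ iff $x_i=\sigma$, constants $\min=0$ and $\max=n-1$,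 and a successor function $S$ with $S(i)=i+1$; $\Sigma$ also denotes this signature. $\Gamma_2$ is the signature with a binary relation symbol $E$ and two constants $s,t$. A successor expansion of a finite structure $A$ is $(A,\min,\max,S)$ with $S$ the successor function of some linear order of the domain having endpoints $\min,\max$; $(\Gamma_2,S)$ is $\Gamma_2$ plus constants $\min,\max$ and the unary function symbol $S$. A $k$-ary interpretation $\pi:L\to K$ consists of a $K$-formula $\partial^\pi(\bar x)$ in a $k$-tuple of variables, for each $n$-ary relation symbol $r$ of $L$ a $K$-formula $r^\pi(\bar x_1,\dots,\bar x_n)$, and for each function or constant symbol of $L$ a definition by cases (cases given by $K$-formulas, values $k$-tuples of $K$-terms). It is quantifier-free if all these formulas are. For a $K$-structure $A$, $A^\pi$ is the $L$-structure with domain $\{\bar a\in A^k: A\models\partial^\pi(\bar a)\}$ and symbols interpreted by their translations. *)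

From HB Require Import structures.
From mathcomp Require Import all_boot.

(* A signature: relation symbols and function symbols with arities;
   constants are function symbols of arity 0. *)
Record signature := Signature {
  rel_sym : Type;
  rel_ar  : rel_sym -> nat;
  fun_sym : Type;
  fun_ar  : fun_sym -> nat }.
Arguments rel_ar {s} r.
Arguments fun_ar {s} f.

Record structure (L : signature) := MkStruct {
  dom   : Type;
  rel_i : forall r : rel_sym L, {ffun 'I_(rel_ar r) -> dom} -> Prop;
  fun_i : forall f : fun_sym L, {ffun 'I_(fun_ar f) -> dom} -> dom }.
Arguments dom {L} s.
Arguments rel_i {L} s r _.
Arguments fun_i {L} s f _.

Inductive term (L : signature) (V : Type) : Type :=
| TVar : V -> term L V
| TApp : forall f : fun_sym L, ('I_(fun_ar f) -> term L V) -> term L V.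
Arguments TVar {L V} v.
Arguments TApp {L V} f ts.

(* Formulas whose free variables range over V; quantifiers bind the
   new variable [None] in [option V]. *)
Inductive formula (L : signature) : Type -> Type :=
| FTrue  V : formula L V
| FFalse V : formula L V
| FEq  V : term L V -> term L V -> formula L V
| FRel V (r : rel_sym L) : ('I_(rel_ar r) -> term L V) -> formula L V
| FNot V : formula L V -> formula L V
| FAnd V : formula L V -> formula L V -> formula L V
| FOr  V : formula L V -> formula L V -> formula L V
| FImp V : formula L V -> formula L V -> formula L V
| FEx  V : formula L (option V) -> formula L V
| FAll V : formula L (option V) -> formula L V.
Arguments FTrue {L V}. Arguments FFalse {L V}. Arguments FEq {L V} t1 t2.
Arguments FRel {L V} r ts. Arguments FNot {L V} p. Arguments FAnd {L V} p q.
Arguments FOr {L V} p q. Arguments FImp {L V} p q. Arguments FEx {L V} p.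
Arguments FAll {L V} p.

Fixpoint teval {L : signature} (A : structure L) {V : Type}
    (t : term L V) (e : V -> dom A) : dom A :=
  match t with
  | TVar v => e v
  | TApp f ts => fun_i A f [ffun j => teval A (ts j) e]
  end.

Definition ext_env {D V : Type} (d : D) (e : V -> D) : option V -> D :=
  fun o => if o is Some v then e v else d.

Fixpoint sat {L : signature} (A : structure L) {V : Type}
    (phi : formula L V) : (V -> dom A) -> Prop :=
  match phi in formula _ V0 return (V0 -> dom A) -> Prop with
  | FTrue _ => fun _ => True
  | FFalse _ => fun _ => False
  | FEq _ t1 t2 => fun e => teval A t1 e = teval A t2 e
  | FRel _ r ts => fun e => rel_i A r [ffun j => teval A (ts j) e]
  | FNot _ p => fun e => ~ sat A p e
  | FAnd _ p q => fun e => sat A p e /\ sat A q e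
  | FOr _ p q => fun e => sat A p e \/ sat A q e
  | FImp _ p q => fun e => sat A p e -> sat A q e
  | FEx _ p => fun e => exists d : dom A, sat A p (ext_env d e)
  | FAll _ p => fun e => forall d : dom A, sat A p (ext_env d e)
  end.

Fixpoint qfree {L : signature} {V : Type} (phi : formula L V) : bool :=
  match phi with
  | FNot _ p => qfree p
  | FAnd _ p q | FOr _ p q | FImp _ p q => qfree p && qfree q
  | FEx _ _ | FAll _ _ => false
  | _ => true
  end.

(* A k-ary interpretation L -> K.  The i-th component of the j-th
   argument tuple of an m-ary symbol is the variable (j, i). *)
Definition fcases (K : signature) (m k : nat) :=
  seq (formula K ('I_m * 'I_k) * ('I_k -> term K ('I_m * 'I_k))).

Record interp (L K : signature) := MkInterp {
  iar  : nat;
  idom : formula K 'I_iar;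
  irel : forall r : rel_sym L, formula K ('I_(rel_ar r) * 'I_iar);
  ifun : forall f : fun_sym L, fcases K (fun_ar f) iar }.
Arguments iar {L K} i. Arguments idom {L K} i. Arguments irel {L K} i r.
Arguments ifun {L K} i f.

Definition qf_interp {L K : signature} (pi : interp L K) : Prop :=
  [/\ qfree (idom pi),
      forall r, qfree (irel pi r) &
      forall f, all (fun c => qfree c.1) (ifun pi f)].

(* Definition by cases: the value is given by the FIRST case whose
   condition holds; [case_value cs e w] says this value is w. *)
Fixpoint case_value {K : signature} (A : structure K) {V : Type} {k : nat}
    (cs : seq (formula K V * ('I_k -> term K V))) (e : V -> dom A)
    (w : 'I_k -> dom A) : Prop :=
  match cs with
  | [::] => False
  | c :: cs' =>
      (sat A c.1 e /\ forall i, teval A (c.2 i) e = w i)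
      \/ (~ sat A c.1 e /\ case_value A cs' e w)
  end.

Definition idomT {L K : signature} (pi : interp L K) (A : structure K) :=
  {v : {ffun 'I_(iar pi) -> dom A} | sat A (idom pi) (fun i => v i)}.

Definition tuple_env {L K : signature} (pi : interp L K) (A : structure K)
    (m : nat) (a : {ffun 'I_m -> idomT pi A}) : 'I_m * 'I_(iar pi) -> dom A :=
  fun p => sval (a p.1) p.2.
Arguments tuple_env {L K pi A m} a.

Definition interp_iso {L K : signature} (pi : interp L K) (A : structure K)
    (B : structure L) : Prop :=
  exists h : idomT pi A -> dom B,
  [/\ bijective h,
      forall r (a : {ffun 'I_(rel_ar r) -> idomT pi A}),
        sat A (irel pi r) (tuple_env a) <-> rel_i B r [ffun j => h (a j)] &
      forall f (a : {ffun 'I_(fun_ar f) -> idomT pi A}),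
        exists w : idomT pi A,
          case_value A (ifun pi f) (tuple_env a) (fun i => sval w i)
          /\ h w = fun_i B f [ffun j => h (a j)]].

Definition struct_iso {L : signature} (A B : structure L) : Prop :=
  exists h : dom A -> dom B,
  [/\ bijective h,
      forall r (a : {ffun 'I_(rel_ar r) -> dom A}),
        rel_i A r a <-> rel_i B r [ffun j => h (a j)] &
      forall f (a : {ffun 'I_(fun_ar f) -> dom A}),
        h (fun_i A f a) = fun_i B f [ffun j => h (a j)]].

Definition noargs {T : Type} : {ffun 'I_0 -> T} := ffun0 (card_ord 0).

Inductive G2fun := G2s | G2t.
Definition Gamma2 : signature :=
  Signature unit (fun _ : unit => 2) G2fun (fun _ : G2fun => 0).

Inductive G2Sfun := GSs | GSt | GSmin | GSmax | GSsucc.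
Definition G2S_ar (f : G2Sfun) : nat := if f is GSsucc then 1 else 0.
Definition Gamma2S : signature := Signature unit (fun _ : unit => 2) G2Sfun G2S_ar.

Inductive Sfun := Smin | Smax | Ssucc.
Definition S_ar (f : Sfun) : nat := if f is Ssucc then 1 else 0.
Definition SigmaSig (Sigma : finType) : signature :=
  Signature Sigma (fun _ : Sigma => 1) Sfun S_ar.

(* A nonempty string x = x_0 ... x_n as a Sigma-structure
   (domain {0..n}); S(i) = i+1 for i < n and S(n) = n. *)
Definition string_struct {Sigma : finType} {n : nat} (x : n.+1.-tuple Sigma) :
    structure (SigmaSig Sigma) :=
  @MkStruct (SigmaSig Sigma) 'I_n.+1
    (fun (s : Sigma) (a : {ffun 'I_1 -> 'I_n.+1}) => tnth x (a ord0) = s)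
    (fun f => match f return {ffun 'I_(S_ar f) -> 'I_n.+1} -> 'I_n.+1 with
              | Smin => fun _ => ord0
              | Smax => fun _ => ord_max
              | Ssucc => fun a => inord (minn (a ord0).+1 n)
              end).

Definition expand_interp {Sigma : finType} (pi : interp Gamma2 (SigmaSig Sigma))
    (cmin cmax : fcases (SigmaSig Sigma) 0 (iar pi))
    (cS : fcases (SigmaSig Sigma) 1 (iar pi)) : interp Gamma2S (SigmaSig Sigma) :=
  @MkInterp Gamma2S (SigmaSig Sigma) (iar pi) (idom pi) (irel pi)
    (fun f => match f return fcases (SigmaSig Sigma) (G2S_ar f) (iar pi) with
              | GSs => ifun pi G2s
              | GSt => ifun pi G2t
              | GSmin => cmin
              | GSmax => cmax
              | GSsucc => cS
              end).

Definition reduct (B : structure Gamma2S) : structure Gamma2 :=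
  @MkStruct Gamma2 (dom B) (rel_i B)
    (fun f => match f return {ffun 'I_(fun_ar (s := Gamma2) f) -> dom B} -> dom B with
              | G2s => fun a => fun_i B GSs a
              | G2t => fun a => fun_i B GSt a
              end).

Definition is_succ_expansion (B : structure Gamma2S) : Prop :=
  let mn := fun_i B GSmin noargs in
  let mx := fun_i B GSmax noargs in
  let S b := fun_i B GSsucc [ffun _ : 'I_1 => b] in
  exists lt : dom B -> dom B -> Prop,
     [/\ (forall a, ~ lt a a),
         (forall a b c, lt a b -> lt b c -> lt a c) &
         (forall a b, a <> b -> lt a b \/ lt b a)]
  /\
     (forall b, b <> mn -> lt mn b) /\ (forall b, b <> mx -> lt b mx)
  /\
     (forall b, b <> mx -> lt b (S b) /\ forall c, ~ (lt b c /\ lt c (S b)))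
  /\ S mx = mx.

Inductive tsym (Sigma : Type) := Sym of Sigma | LEnd | REnd.
Arguments Sym {Sigma} s. Arguments LEnd {Sigma}. Arguments REnd {Sigma}.
Inductive move := MLeft | MStay | MRight.

Record nmfa (Sigma : finType) := MkNmfa {
  state : finType;
  heads : nat;
  q_start : state;
  q_acc : state;
  delta : state -> {ffun 'I_heads -> tsym Sigma} -> state ->
          {ffun 'I_heads -> move} -> bool }.
Arguments state {Sigma} _. Arguments heads {Sigma} _.
Arguments q_start {Sigma} _. Arguments q_acc {Sigma} _.
Arguments delta {Sigma _} _ _ _ _.

Definition nmfa_wf {Sigma : finType} (M : nmfa Sigma) : Prop :=
  [/\ (forall q a q' m i, @delta _ M q a q' m -> a i = LEnd -> m i <> MLeft),
      (forall q a q' m i, @delta _ M q a q' m -> a i = REnd -> m i <> MRight) &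
      (forall a q' m, delta (q_acc M) a q' m <->
         (q' = q_acc M /\
          forall i, m i = match a i with LEnd => MStay | _ => MLeft end))].

Definition step (p : nat) (m : move) : nat :=
  match m with MLeft => p.-1 | MStay => p | MRight => p.+1 end.

(* Tape for input x of length n+1: position 0 holds |>, positions
   1..n+1 hold x_0..x_n, position n+2 holds <|. *)
Definition tape_sym {Sigma : finType} {n : nat} (x : n.+1.-tuple Sigma)
    (p : nat) : tsym Sigma :=
  if p == 0 then LEnd else if p == n.+2 then REnd
  else Sym (nth (thead x) x p.-1).

Definition config {Sigma : finType} (M : nmfa Sigma) (n : nat) : Type :=
  (state M * {ffun 'I_(heads M) -> 'I_n.+3})%type.

Definition cedge {Sigma : finType} (M : nmfa Sigma) {n : nat}
    (x : n.+1.-tuple Sigma) (c c' : config M n) : Prop :=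
  exists m : {ffun 'I_(heads M) -> move},
    delta c.1 [ffun i => tape_sym x (c.2 i)] c'.1 m /\
    forall i, val (c'.2 i) = step (c.2 i) (m i).

Definition config_graph {Sigma : finType} (M : nmfa Sigma) {n : nat}
    (x : n.+1.-tuple Sigma) : structure Gamma2 :=
  @MkStruct Gamma2 (config M n)
    (fun _ (a : {ffun 'I_2 -> config M n}) => cedge M x (a ord0) (a ord_max))
    (fun f => match f return {ffun 'I_(fun_ar (s := Gamma2) f) -> config M n} -> config M n with
              | G2s => fun _ => (q_start M, [ffun _ => ord0])
              | G2t => fun _ => (q_acc M, [ffun _ => ord0])
              end).

From HB Require Import structures.
From mathcomp Require Import all_boot zify.
From Stdlib Require Import Classical.
Set Implicit Arguments. Unset Strict Implicit. Unset Printing Implicit Defensive.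

(* A configuration of M on an input of length n+1 is a state and h head
   positions in [0, n+2].  Read it as a numeral whose first digit is the rank
   of the state (radix |Q|) and whose other digits are the head positions
   (radix n+3), and code each digit d by a pair of string positions: (min, max)
   for d = 0, (d-1, min) for 0 < d < n+2 and (max, max) for d = n+2.  Once
   0 < n this coding is injective, and it covers all states when |Q| <= n; so a
   configuration is a 2(h+1)-tuple of string positions.  Reading the symbol
   under a head, moving a head and comparing with a fixed state are then
   quantifier-free conditions on these pairs, and the edge relation is a finite
   disjunction over the transitions of M.  Ordering configurations by numeric
   value gives a linear order with endpoints 0...0 and the maximal numeral; its
   successor keeps the digits before the last non-maximal one, increments that
   one and resets the later ones, which is a quantifier-free definition by
   cases on the position of that digit. *)

(** * Mixed-radix numerals *)

Lemma all2_nthP (S T : Type) (r : S -> T -> bool) x0 y0 s t :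
  all2 r s t <->
  size s = size t /\ forall i, i < size t -> r (nth x0 s i) (nth y0 t i).
Proof.
elim: s t => [|x s IH] [|y t] //=; [by split=> // -[] .. |].
rewrite -(rwP andP) IH; split.
  by move=> [rxy [-> H]]; split=> // -[|i] //= /H.
by move=> [[->] H]; split; [exact: (H 0) | split=> // i /(H i.+1)].
Qed.
Arguments all2_nthP {S T r} x0 y0 {s t}.

Lemma nth_map_predn (rs : seq nat) i : nth 0 (map predn rs) i = (nth 0 rs i).-1.
Proof. by elim: rs i => [|r rs IH] [|i] //=. Qed.

Section MixedRadix.
Implicit Types rs ds : seq nat.

Fixpoint radix_value rs ds : nat :=
  match rs, ds with
  | r :: rs', d :: ds' => d * \prod_(r' <- rs') r' + radix_value rs' ds'
  | _, _ => 0
  end.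

Fixpoint radix_succ rs ds : seq nat :=
  match rs, ds with
  | r :: rs', d :: ds' =>
      if ds' == map predn rs' then
        (if d.+1 < r then d.+1 :: nseq (size ds') 0 else ds)
      else d :: radix_succ rs' ds'
  | _, _ => ds
  end.

Lemma radix_value_lt rs ds : all2 ltn ds rs -> radix_value rs ds < \prod_(r <- rs) r.
Proof.
elim: rs ds => [|r rs IH] [|d ds] //=; first by rewrite big_nil.
by move=> /andP[dr /IH]; rewrite big_cons; nia.
Qed.

Lemma radix_value_inj rs : {in [pred ds | all2 ltn ds rs] &, injective (radix_value rs)}.
Proof.
elim: rs => [|r rs IH] [|d ds] [|d' ds']; rewrite ?inE //= => /andP[dr V] /andP[dr' V'] E.
have L := radix_value_lt V; have L' := radix_value_lt V'.
have Edd' : d = d'.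
  have := congr1 (fun m => m %/ \prod_(r' <- rs) r') E.
  by rewrite !divnMDl ?divn_small //; lia.
by rewrite Edd' (IH ds ds') //; lia.
Qed.

Lemma radix_value_nseq0 rs m : radix_value rs (nseq m 0) = 0.
Proof. by elim: rs m => [|r rs IH] [|m] //=; rewrite IH. Qed.

Lemma radix_value_max rs :
  0 < \prod_(r <- rs) r -> radix_value rs (map predn rs) = (\prod_(r <- rs) r).-1.
Proof.
elim: rs => [|r rs IH]; first by rewrite big_nil.
rewrite big_cons /= => Hp.
have /andP[Hr Hrs] : (0 < r) && (0 < \prod_(r' <- rs) r') by rewrite -muln_gt0.
by rewrite IH //; case: r Hr Hp => // r _; rewrite mulSn; lia.
Qed.

Lemma radix_succ_max rs : radix_succ rs (map predn rs) = map predn rs.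
Proof. by case: rs => [|r rs] //=; rewrite eqxx; case: ifP => //; lia. Qed.

Lemma all2_ltn_nseq0 rs ds : all2 ltn ds rs -> all2 ltn (nseq (size ds) 0) rs.
Proof. by elim: rs ds => [|r rs IH] [|d ds] //= /andP[dr /IH ->]; rewrite andbT; lia. Qed.

Lemma radix_succ_digits rs ds : all2 ltn ds rs -> all2 ltn (radix_succ rs ds) rs.
Proof.
elim: rs ds => [|r rs IH] [|d ds] //= /andP[dr V].
case: eqP => _; last by rewrite /= dr IH.
by case: ifP => [dr1|_] /=; rewrite ?dr1 ?dr ?all2_ltn_nseq0 ?V.
Qed.

Lemma radix_value_succ rs ds : all2 ltn ds rs -> ds != map predn rs ->
  radix_value rs (radix_succ rs ds) = (radix_value rs ds).+1.
Proof.
elim: rs ds => [|r rs IH] [|d ds] //= /andP[dr V].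
case: (eqVneq ds (map predn rs)) => [Emax|Hn'] Hn; last by rewrite /= IH ?addnS.
have dr1 : d.+1 < r by apply: contraNT Hn => Hr; rewrite Emax (_ : d = r.-1) //; lia.
have P0 : 0 < \prod_(r' <- rs) r' by have := radix_value_lt V; lia.
by rewrite dr1 /= radix_value_nseq0 Emax radix_value_max // mulSn; lia.
Qed.

Lemma eq_map_prednP rs ds : size ds = size rs ->
  ds = map predn rs <-> forall i, i < size rs -> nth 0 ds i = (nth 0 rs i).-1.
Proof.
move=> Hs; split=> [-> i _|H]; first exact: nth_map_predn.
by apply: (@eq_from_nth _ 0) => [|i]; rewrite ?size_map // Hs => /H ->; rewrite nth_map_predn.
Qed.

Lemma last_nonmax_digit rs ds : size ds = size rs -> ds != map predn rs ->
  exists2 j, j < size rs &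
    nth 0 ds j != (nth 0 rs j).-1 /\
    forall i, j < i < size rs -> nth 0 ds i = (nth 0 rs i).-1.
Proof.
elim: rs ds => [|r rs IH] [|d ds] //= [Hs] Hn.
case: (eqVneq ds (map predn rs)) => [Emax|Hn'].
  exists 0 => //=; split=> [|[|i] // Hi]; last by rewrite /= Emax nth_map_predn.
  by apply: contraNneq Hn => ->; rewrite Emax.
have [j Hj [Hd Hmax]] := IH ds Hs Hn'.
by exists j.+1 => //; split=> // -[|i] //= Hi; apply: Hmax.
Qed.

Lemma nth_radix_succ rs ds j : all2 ltn ds rs -> j < size rs ->
  nth 0 ds j != (nth 0 rs j).-1 ->
  (forall i, j < i < size rs -> nth 0 ds i = (nth 0 rs i).-1) ->
  forall i, nth 0 (radix_succ rs ds) i =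
    if i < j then nth 0 ds i else if i == j then (nth 0 ds j).+1 else 0.
Proof.
elim: rs ds j => [|r rs IH] [|d ds] [|j] //= /andP[dr V] Hj Hn Hmax.
- have -> : ds == map predn rs.
    have [Hs _] := (all2_nthP 0 0).1 V.
    apply/eqP/(@eq_from_nth _ 0) => [|i]; first by rewrite size_map.
    by rewrite Hs => Hi; rewrite nth_map_predn; apply: (Hmax i.+1).
  have -> : d.+1 < r by move: Hn dr; lia.
  by case=> [|i] //=; rewrite nth_nseq if_same.
- have -> : (ds == map predn rs) = false.
    by apply: contraNF Hn => /eqP ->; rewrite nth_map_predn.
  by case=> [|i] //=; rewrite (IH ds j V Hj Hn) // => i' Hi'; apply: (Hmax i'.+1).
Qed.

End MixedRadix.

(** * Formulas over strings *)

Section Connectives.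
Variable L : signature.

Fixpoint big_and {V} (ps : seq (formula L V)) : formula L V :=
  if ps is p :: ps' then FAnd p (big_and ps') else FTrue.
Fixpoint big_or {V} (ps : seq (formula L V)) : formula L V :=
  if ps is p :: ps' then FOr p (big_or ps') else FFalse.

Lemma qfree_big_and V (ps : seq (formula L V)) : qfree (big_and ps) = all qfree ps.
Proof. by elim: ps => //= p ps ->. Qed.
Lemma qfree_big_or V (ps : seq (formula L V)) : qfree (big_or ps) = all qfree ps.
Proof. by elim: ps => //= p ps ->. Qed.

Variable A : structure L.

Lemma sat_big_and V (T : eqType) (f : T -> formula L V) s e :
  sat A (big_and [seq f z | z <- s]) e <-> forall z, z \in s -> sat A (f z) e.
Proof.
elim: s => [|z s IH] /=; first by split.
rewrite IH; split=> [[Hz Hs] z'|H]; first by rewrite inE => /predU1P[->|/Hs].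
by split=> [|z' Hz']; apply: H; rewrite inE ?eqxx ?Hz' ?orbT.
Qed.

Lemma sat_big_or V (T : eqType) (f : T -> formula L V) s e :
  sat A (big_or [seq f z | z <- s]) e <-> exists2 z, z \in s & sat A (f z) e.
Proof.
elim: s => [|z s IH] /=; first by split=> // -[].
rewrite IH; split=> [[Hz|[z' Hz' Hs]]|[z']]; first by exists z; rewrite ?mem_head.
  by exists z' => //; rewrite inE Hz' orbT.
by rewrite inE => /predU1P[->|Hz' Hs]; [left | right; exists z'].
Qed.

Lemma case_value_map V k (T : eqType) (f : T -> formula L V * ('I_k -> term L V))
    (s : seq T) e w :
  (exists2 z, z \in s & sat A (f z).1 e) ->
  (forall z, z \in s -> sat A (f z).1 e -> forall i, teval A ((f z).2 i) e = w i) ->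
  case_value A [seq f z | z <- s] e w.
Proof.
elim: s => [[z]//|z s IH] [z' Hz' Hs] Hall /=.
have [Hc|Hc] := classic (sat A (f z).1 e).
  by left; split=> //; apply: Hall; rewrite ?mem_head.
right; split=> //; apply: IH => [|z'' Hz'']; last by apply: Hall; rewrite inE Hz'' orbT.
by exists z' => //; move: Hz'; rewrite inE => /predU1P[Ez|//]; rewrite Ez in Hs.
Qed.

End Connectives.

Definition tsym_code {Sigma : Type} (a : tsym Sigma) : option (option Sigma) :=
  match a with LEnd => None | REnd => Some None | Sym s => Some (Some s) end.
Definition tsym_decode {Sigma : Type} (o : option (option Sigma)) : tsym Sigma :=
  match o with None => LEnd | Some None => REnd | Some (Some s) => Sym s end.
Lemma tsym_codeK {Sigma : Type} : cancel (@tsym_code Sigma) tsym_decode.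
Proof. by case. Qed.
HB.instance Definition _ (Sigma : finType) :=
  Finite.copy (tsym Sigma) (can_type (@tsym_codeK Sigma)).

Definition move_code (m : move) : option bool :=
  match m with MLeft => Some false | MStay => None | MRight => Some true end.
Definition move_decode (o : option bool) : move :=
  match o with Some false => MLeft | None => MStay | Some true => MRight end.
Lemma move_codeK : cancel move_code move_decode. Proof. by case. Qed.
HB.instance Definition _ := Finite.copy move (can_type move_codeK).

Definition pos_code (n p : nat) : nat * nat :=
  if p == 0 then (0, n) else if p == n.+2 then (n, n) else (p.-1, 0).
Definition pos_decode (n : nat) (uv : nat * nat) : nat :=
  if uv.2 == n then (if uv.1 == 0 then 0 else n.+2) else uv.1.+1.

Variant pos_code_spec (n p : nat) : nat * nat -> Prop :=
  | PosCodeLeft of p = 0 : pos_code_spec n p (0, n)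
  | PosCodeRight of p = n.+2 : pos_code_spec n p (n, n)
  | PosCodeSym of 0 < p < n.+2 : pos_code_spec n p (p.-1, 0).

Lemma pos_codeP n p : p < n.+3 -> pos_code_spec n p (pos_code n p).
Proof.
rewrite /pos_code => Hp; case: eqP => [->|p0]; first exact: PosCodeLeft.
by case: eqP => [->|pn]; [exact: PosCodeRight | apply: PosCodeSym; lia].
Qed.

Lemma pos_code0 n : pos_code n 0 = (0, n). Proof. by []. Qed.
Lemma pos_code_last n : pos_code n n.+2 = (n, n). Proof. by rewrite /pos_code eqxx. Qed.
Lemma pos_code_sym n p : 0 < p < n.+2 -> pos_code n p = (p.-1, 0).
Proof. by move=> Hp; rewrite /pos_code !ifF //; apply/eqP; lia. Qed.

Lemma pos_code_le n p : p < n.+3 -> (pos_code n p).1 <= n /\ (pos_code n p).2 <= n.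
Proof. by case/pos_codeP=> /=; lia. Qed.

Section PosCode.
Variable n : nat.
Hypothesis n_gt0 : 0 < n.

Lemma pos_codeK p : p < n.+3 -> pos_decode n (pos_code n p) = p.
Proof. by case/pos_codeP=> [->|->|Hp]; rewrite /pos_decode /= ?eqxx //; case: eqP; lia. Qed.

Lemma pos_code_inj : {in gtn n.+3 &, injective (pos_code n)}.
Proof. by move=> p p' Hp Hp' E; rewrite -(pos_codeK Hp) -(pos_codeK Hp') E. Qed.

End PosCode.

Section StringFormulas.
Variable Sigma : finType.
Local Notation K := (SigmaSig Sigma).
Local Notation tpair V := (term K V * term K V)%type.

Definition tmin {V} : term K V := @TApp K V Smin noargs.
Definition tmax {V} : term K V := @TApp K V Smax noargs.
Definition tsucc {V} (t : term K V) : term K V := @TApp K V Ssucc (fun _ => t).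
Definition tnat {V} (i : nat) : term K V := iter i tsucc tmin.

Definition FEq2 {V} (a b : tpair V) : formula K V :=
  FAnd (FEq a.1 b.1) (FEq a.2 b.2).

Definition tcode {V} (p : nat) : tpair V :=
  if p == 0 then (tmin, tmax) else (tnat p.-1, tmin).

Definition is_pos_code {V} (a : tpair V) : formula K V :=
  FOr (FEq a.2 tmin) (FAnd (FEq a.2 tmax) (FOr (FEq a.1 tmin) (FEq a.1 tmax))).

Definition is_code_lt {V} (m : nat) (a : tpair V) : formula K V :=
  big_or [seq FEq2 a (tcode p) | p <- iota 0 m].

Definition reads {V} (a : tpair V) (o : tsym Sigma) : formula K V :=
  match o with
  | LEnd => FEq2 a (tmin, tmax)
  | REnd => FEq2 a (tmax, tmax)
  | Sym s => FAnd (FEq a.2 tmin) (@FRel K V s (fun _ => a.1))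
  end.

Definition succ_case {V} (s : nat) (a : tpair V) : formula K V * tpair V :=
  match s with
  | 0 => (FEq2 a (tmin, tmax), (tmin, tmin))
  | 1 => (FAnd (FEq a.2 tmin) (FNot (FEq a.1 tmax)), (tsucc a.1, tmin))
  | _ => (FEq2 a (tmax, tmin), (tmax, tmax))
  end.

Definition is_succ_code {V} (a b : tpair V) : formula K V :=
  big_or [seq FAnd (succ_case s a).1 (FEq2 b (succ_case s a).2) | s <- iota 0 3].

Definition moves {V} (a b : tpair V) (m : move) : formula K V :=
  match m with
  | MLeft => FOr (FAnd (FEq2 a (tmin, tmax)) (FEq2 b (tmin, tmax))) (is_succ_code b a)
  | MStay => FEq2 b a
  | MRight => is_succ_code a b
  end.

Lemma qfree_is_code_lt V m (a : tpair V) : qfree (is_code_lt m a).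
Proof. by rewrite qfree_big_or all_map; apply/allP. Qed.

Lemma qfree_reads V (a : tpair V) o : qfree (reads a o).
Proof. by case: o. Qed.

Lemma qfree_succ_case V s (a : tpair V) : qfree (succ_case s a).1.
Proof. by case: s => [|[|s]]. Qed.

Lemma qfree_moves V (a b : tpair V) m : qfree (moves a b m).
Proof.
have Hs (c d : tpair V) : qfree (is_succ_code c d).
  by rewrite qfree_big_or all_map; apply/allP => s _ /=; rewrite qfree_succ_case.
by case: m; rewrite /= ?Hs.
Qed.

End StringFormulas.
Arguments tmin {Sigma V}. Arguments tmax {Sigma V}.
Arguments tnat {Sigma V} i. Arguments tcode {Sigma V} p.

Section StringSemantics.
Variables (Sigma : finType) (n : nat) (x : n.+1.-tuple Sigma).
Local Notation K := (SigmaSig Sigma).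
Local Notation A := (string_struct x).
Local Notation tpair V := (term K V * term K V)%type.

Definition term_val {V} (e : V -> 'I_n.+1) (t : term K V) : nat := teval A t e.
Definition pair_val {V} (e : V -> 'I_n.+1) (a : tpair V) : nat * nat :=
  (term_val e a.1, term_val e a.2).

Lemma tape_sym_LEnd p : tape_sym x p = LEnd <-> p = 0.
Proof. by rewrite /tape_sym; split=> [|->]; [case: eqP => // _; case: eqP | rewrite eqxx]. Qed.

Lemma tape_sym_REnd p : tape_sym x p = REnd <-> p = n.+2.
Proof. by rewrite /tape_sym; split=> [|->]; [case: eqP => // _; case: eqP | rewrite eqxx]. Qed.

Lemma tape_sym_sym p : 0 < p < n.+2 -> tape_sym x p = Sym (nth (thead x) x p.-1).
Proof. by move=> Hp; rewrite /tape_sym !ifN_eq //; apply/eqP; lia. Qed.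

Section Env.
Variables (V : Type) (e : V -> 'I_n.+1).

Lemma term_val_le (t : term K V) : term_val e t <= n. Proof. by rewrite -ltnS ltn_ord. Qed.

Lemma term_val_succ (t : term K V) : term_val e (tsucc t) = minn (term_val e t).+1 n.
Proof. by rewrite /term_val /= ffunE inordK // ltnS geq_minr. Qed.

Lemma term_val_nat i : i <= n -> term_val e (tnat i) = i.
Proof. by elim: i => [|i IH] Hi //; rewrite /tnat iterS term_val_succ IH; lia. Qed.

Lemma sat_FEq (t1 t2 : term K V) : sat A (FEq t1 t2) e <-> term_val e t1 = term_val e t2.
Proof. by split=> [/= E|/val_inj]; first by rewrite /term_val E. Qed.

Lemma sat_FEq2 (a b : tpair V) : sat A (FEq2 a b) e <-> pair_val e a = pair_val e b.
Proof.
rewrite /pair_val; split=> [[/sat_FEq -> /sat_FEq ->] //|[E1 E2]].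
by split; apply/sat_FEq.
Qed.

Lemma pair_val_tcode p : p <= n -> pair_val e (tcode p) = pos_code n p.
Proof.
rewrite /tcode /pos_code; case: eqP => // p0 pn.
by rewrite ifF; [rewrite /pair_val /= term_val_nat //; lia | apply/eqP; lia].
Qed.

Lemma sat_is_pos_code (a : tpair V) :
  sat A (is_pos_code a) e <-> exists2 p, p < n.+3 & pair_val e a = pos_code n p.
Proof.
have Ha1 := term_val_le a.1; rewrite /pair_val; split.
  case=> [/sat_FEq E|[/sat_FEq E [/sat_FEq E'|/sat_FEq E']]].
  - by exists (term_val e a.1).+1; [lia | rewrite pos_code_sym ?E //; lia].
  - by exists 0 => //; rewrite pos_code0 E E'.
  - by exists n.+2 => //; rewrite pos_code_last E E'.
move=> [p /pos_codeP [] _ [E1 E2]];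
  [right; split; [|left] | right; split; [|right] | left]; exact/sat_FEq.
Qed.

Lemma sat_is_code_lt m (a : tpair V) : m <= n.+1 ->
  sat A (is_code_lt m a) e <-> exists2 p, p < m & pair_val e a = pos_code n p.
Proof.
move=> Hm; rewrite sat_big_or; split=> [[p]|[p Hp E]].
  by rewrite mem_iota => /andP[_ Hp] /sat_FEq2 ->; exists p; rewrite ?pair_val_tcode //; lia.
by exists p; [rewrite mem_iota | apply/sat_FEq2; rewrite E pair_val_tcode //; lia].
Qed.

Lemma pair_val_min_max : pair_val e (tmin, tmax) = pos_code n 0. Proof. by []. Qed.
Lemma pair_val_min_min : pair_val e (tmin, tmin) = pos_code n 1.
Proof. by rewrite pos_code_sym. Qed.
Lemma pair_val_max_min : pair_val e (tmax, tmin) = pos_code n n.+1.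
Proof. by rewrite pos_code_sym ?ltnSn. Qed.
Lemma pair_val_max_max : pair_val e (tmax, tmax) = pos_code n n.+2.
Proof. by rewrite pos_code_last. Qed.

Lemma sat_FRel s (t : term K V) :
  sat A (@FRel K V s (fun _ => t)) e <-> tnth x (teval A t e) = s.
Proof. by rewrite /= ffunE. Qed.

Lemma sat_reads_sym (a : tpair V) s :
  sat A (reads a (Sym s)) e <-> term_val e a.2 = 0 /\ nth (thead x) x (term_val e a.1) = s.
Proof.
rewrite -(tnth_nth _ _ (teval A a.1 e)).
by split=> [[/sat_FEq E /sat_FRel R]|[E R]]; split=> //; [apply/sat_FEq | apply/sat_FRel].
Qed.

Lemma sat_succ_case1 (a : tpair V) :
  sat A (succ_case 1 a).1 e <-> term_val e a.2 = 0 /\ term_val e a.1 <> n.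
Proof.
split=> [[/sat_FEq E H]|[E H]]; split=> //.
- by move=> E1; apply: H; apply/sat_FEq.
- exact/sat_FEq.
- by move/sat_FEq.
Qed.

Hypothesis n_gt0 : 0 < n.

Lemma sat_FEq2_code (a b : tpair V) p p' :
  pair_val e a = pos_code n p -> pair_val e b = pos_code n p' -> p < n.+3 -> p' < n.+3 ->
  sat A (FEq2 a b) e <-> p = p'.
Proof.
move=> Ha Hb Hp Hp'; rewrite sat_FEq2 Ha Hb.
by split=> [/(pos_code_inj n_gt0 Hp Hp')|->].
Qed.

Lemma sat_reads (a : tpair V) p o : pair_val e a = pos_code n p -> p < n.+3 ->
  sat A (reads a o) e <-> tape_sym x p = o.
Proof.
move=> Ha Hp; case: o => [s||]; last 2 first.
- by rewrite (sat_FEq2_code Ha pair_val_min_max) // tape_sym_LEnd.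
- by rewrite (sat_FEq2_code Ha pair_val_max_max) // tape_sym_REnd.
rewrite sat_reads_sym; move: Ha; rewrite /pair_val.
case: (pos_codeP Hp) => [->|->|Hp'] [-> ->].
- by rewrite (tape_sym_LEnd 0).2 //; split=> [[]|//]; lia.
- by rewrite (tape_sym_REnd _).2 //; split=> [[]|//]; lia.
- by rewrite tape_sym_sym //; split=> [[_ ->]|[->]].
Qed.

Lemma succ_case_total (a : tpair V) p : pair_val e a = pos_code n p -> p < n.+2 ->
  exists2 s, s < 3 & sat A (succ_case s a).1 e.
Proof.
move=> Ha Hp; have [Ep|Hp'] := eqVneq p n.+1.
  by exists 2 => //; apply/(sat_FEq2_code Ha pair_val_max_min) => //; lia.
move: Ha; rewrite /pair_val; case: (pos_codeP (ltnW Hp)) => [_|pn|/andP[p0 _]] [E1 E2]; try lia.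
  by exists 0 => //; apply/sat_FEq2; rewrite /pair_val E1 E2.
by exists 1 => //; apply/sat_succ_case1; rewrite E1 E2; split=> //; lia.
Qed.

Lemma succ_case_val (a : tpair V) p s : pair_val e a = pos_code n p -> p < n.+3 ->
  sat A (succ_case s a).1 e -> p < n.+2 /\ pair_val e (succ_case s a).2 = pos_code n p.+1.
Proof.
move=> Ha Hp; case: s => [|[|s]].
- by move/(sat_FEq2_code Ha pair_val_min_max) => -> //; rewrite pair_val_min_min.
- move/sat_succ_case1; move: Ha; rewrite /pair_val.
  case: (pos_codeP Hp) => [_|_|/andP[p0 pn]] [E1 E2]; rewrite E1 E2 => -[H1 H2]; try lia.
  split; first lia.
  by rewrite /= term_val_succ E1 pos_code_sym; [congr pair => //; lia | lia].
- by move/(sat_FEq2_code Ha pair_val_max_min) => -> //; rewrite pair_val_max_max.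
Qed.

Lemma sat_is_succ_code (a b : tpair V) p p' :
  pair_val e a = pos_code n p -> pair_val e b = pos_code n p' -> p < n.+3 -> p' < n.+3 ->
  sat A (is_succ_code a b) e <-> p' = p.+1.
Proof.
move=> Ha Hb Hp Hp'; rewrite sat_big_or; split.
  move=> [s _ [/(succ_case_val Ha Hp) [lt_p Hc] Hbc]].
  exact: (sat_FEq2_code Hb Hc Hp' lt_p).1 Hbc.
move=> Ep'; have lt_p : p < n.+2 by lia.
have [s Hs Hc] := succ_case_total Ha lt_p; exists s; first by rewrite mem_iota.
have [_ Hv] := succ_case_val Ha Hp Hc.
by split=> //; apply/(sat_FEq2_code Hb Hv).
Qed.

Lemma sat_moves (a b : tpair V) p p' m :
  pair_val e a = pos_code n p -> pair_val e b = pos_code n p' -> p < n.+3 -> p' < n.+3 ->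
  sat A (moves a b m) e <-> p' = step p m.
Proof.
move=> Ha Hb Hp Hp'; case: m.
- have Ea := sat_FEq2_code Ha pair_val_min_max Hp isT.
  have Eb := sat_FEq2_code Hb pair_val_min_max Hp' isT.
  have Es := sat_is_succ_code Hb Ha Hp' Hp.
  split=> [[[/Ea -> /Eb ->]|/Es ->] //|/= Ep'].
  have [p0|p0] := eqVneq p 0; first by left; split; [apply/Ea | apply/Eb; rewrite Ep' p0].
  by right; apply/Es; lia.
- exact: sat_FEq2_code.
- exact: sat_is_succ_code.
Qed.

End Env.
End StringSemantics.

(** * Configurations as numerals and as tuples of positions *)

Lemma card_state_gt0 (Sigma : finType) (M : nmfa Sigma) : 0 < #|state M|.
Proof. by apply/card_gt0P; exists (q_start M). Qed.

Section ConfigDigits.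
Variables (Sigma : finType) (M : nmfa Sigma) (n : nat).
Local Notation h := (heads M).
Local Notation q := #|state M|.

Definition config_radices : seq nat := q :: nseq h n.+3.

Definition config_digits (c : config M n) : seq nat :=
  (enum_rank c.1 : nat) :: [seq val (c.2 i) | i <- enum 'I_h].

Definition digits_config (ds : seq nat) : config M n :=
  (nth (q_start M) (enum (state M)) (head 0 ds), [ffun i : 'I_h => inord (nth 0 (behead ds) i)]).

Lemma size_config_radices : size config_radices = h.+1.
Proof. by rewrite /= size_nseq. Qed.

Lemma nth_config_radices j : j < h.+1 -> nth 0 config_radices j = if j == 0 then q else n.+3.
Proof. by case: j => [|j] //=; rewrite ltnS => Hj; rewrite nth_nseq Hj. Qed.

Lemma nth_config_digits c (i : 'I_h) : nth 0 (config_digits c) i.+1 = c.2 i.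
Proof. by rewrite /= (nth_map i) ?size_enum_ord // nth_ord_enum. Qed.

Lemma config_digits_valid c : all2 ltn (config_digits c) config_radices.
Proof.
apply/(all2_nthP 0 0); split=> [|[|j]]; first by rewrite /= size_map size_enum_ord size_nseq.
  by rewrite size_config_radices => _; exact: ltn_ord.
rewrite size_config_radices ltnS => Hj.
by rewrite (nth_config_digits c (Ordinal Hj)) /= nth_nseq Hj.
Qed.

Lemma config_digitsK : cancel config_digits digits_config.
Proof.
case=> s f; rewrite /digits_config /= nth_enum_rank; congr pair.
by apply/ffunP => i; rewrite ffunE (nth_map i) ?size_enum_ord // nth_ord_enum inord_val.
Qed.

Lemma digits_configK ds : all2 ltn ds config_radices -> config_digits (digits_config ds) = ds.
Proof.
case: ds => [|d ds] /(all2_nthP 0 0) [Hs H]; first by rewrite size_config_radices in Hs.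
have Hd : d < q by apply: (H 0); rewrite size_config_radices.
congr cons; first by rewrite /= -(enum_val_nth (q_start M) (Ordinal Hd)) enum_valK.
move: Hs; rewrite /= size_nseq => -[Hs].
apply: (@eq_from_nth _ 0) => [|i]; first by rewrite size_map size_enum_ord.
rewrite size_map size_enum_ord => Hi.
rewrite (nth_map (Ordinal Hi)) ?size_enum_ord // ffunE nth_enum_ord // inordK //.
by have := H i.+1; rewrite size_config_radices /= nth_nseq Hi; apply.
Qed.

End ConfigDigits.

Definition pair_proj {T : Type} (b : bool) (uv : T * T) : T := if b then uv.2 else uv.1.

Section ConfigInterp.
Variables (Sigma : finType) (M : nmfa Sigma).
Local Notation K := (SigmaSig Sigma).
Local Notation h := (heads M).
Local Notation q := #|state M|.
Local Notation tpair V := (term K V * term K V)%type.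

Definition slot_arity : nat := #|{: 'I_h.+1 * bool}|.
Local Notation kk := slot_arity.

Definition slot (j : 'I_h.+1) (b : bool) : 'I_kk := enum_rank (j, b).

Definition slot_terms {V} (X : 'I_kk -> term K V) (j : 'I_h.+1) : tpair V :=
  (X (slot j false), X (slot j true)).

Definition digits_terms {V} (f : 'I_h.+1 -> tpair V) : 'I_kk -> term K V :=
  fun i => pair_proj (enum_val i).2 (f (enum_val i).1).

Definition digit_dom {V} (j : 'I_h.+1) (a : tpair V) : formula K V :=
  if j == 0 :> nat then is_code_lt q a else is_pos_code a.

Definition tuple_domf : formula K 'I_kk :=
  big_and [seq digit_dom j (slot_terms TVar j) | j <- enum 'I_h.+1].

Definition transition : finType :=
  ((state M * {ffun 'I_h -> tsym Sigma}) * (state M * {ffun 'I_h -> move}))%type.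

Definition head_formula {V} (X Y : 'I_kk -> term K V) (z : transition) (i : 'I_h) :
    formula K V :=
  FAnd (reads (slot_terms X (lift ord0 i)) (z.1.2 i))
       (moves (slot_terms X (lift ord0 i)) (slot_terms Y (lift ord0 i)) (z.2.2 i)).

Definition trans_formula {V} (X Y : 'I_kk -> term K V) (z : transition) : formula K V :=
  big_and (FEq2 (slot_terms X ord0) (tcode (enum_rank z.1.1)) ::
           FEq2 (slot_terms Y ord0) (tcode (enum_rank z.2.1)) ::
           [seq head_formula X Y z i | i <- enum 'I_h]).

Definition edge_formula : formula K ('I_2 * 'I_kk) :=
  big_or [seq trans_formula (fun i => TVar (ord0, i)) (fun i => TVar (ord_max, i)) z
         | z <- enum [pred z : transition | delta z.1.1 z.1.2 z.2.1 z.2.2]].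

Definition const_cases (f : 'I_h.+1 -> tpair ('I_0 * 'I_kk)) : fcases K 0 kk :=
  [:: (FTrue, digits_terms f)].

Definition state_const (s : state M) (j : 'I_h.+1) : tpair ('I_0 * 'I_kk) :=
  if j == 0 :> nat then tcode (enum_rank s) else (tmin, tmax).

Definition max_digit {V} (j : 'I_h.+1) : tpair V :=
  if j == 0 :> nat then tcode q.-1 else (tmax, tmax).

Definition config_interp : interp Gamma2 K :=
  @MkInterp Gamma2 K kk tuple_domf (fun _ => edge_formula)
    (fun f => const_cases (state_const (if f is G2s then q_start M else q_acc M))).

Local Notation X1 := (fun i : 'I_kk => TVar (ord0, i) : term K ('I_1 * 'I_kk)).

Definition succ_at_max : formula K ('I_1 * 'I_kk) * ('I_kk -> term K ('I_1 * 'I_kk)) :=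
  (big_and [seq FEq2 (slot_terms X1 j) (max_digit j) | j <- enum 'I_h.+1], X1).

Definition succ_at (j : 'I_h.+1) (s : nat) :
    formula K ('I_1 * 'I_kk) * ('I_kk -> term K ('I_1 * 'I_kk)) :=
  (big_and ((succ_case s (slot_terms X1 j)).1 :: FNot (FEq2 (slot_terms X1 j) (max_digit j)) ::
            [seq FEq2 (slot_terms X1 j') (max_digit j') | j' : 'I_h.+1 <- enum 'I_h.+1 & j < j']),
   digits_terms (fun j' => if j' < j then slot_terms X1 j'
                           else if j' == j :> nat then (succ_case s (slot_terms X1 j)).2
                           else (tmin, tmax))).

Definition succ_index : seq (option ('I_h.+1 * nat)) :=
  None :: [seq Some (j, s) | j <- enum 'I_h.+1, s <- iota 0 3].

Definition succ_case_of (z : option ('I_h.+1 * nat)) :=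
  if z is Some (j, s) then succ_at j s else succ_at_max.

Definition min_cases : fcases K 0 kk := const_cases (fun=> (tmin, tmax)).
Definition max_cases : fcases K 0 kk := const_cases max_digit.
Definition succ_cases : fcases K 1 kk := [seq succ_case_of z | z <- succ_index].

Definition config_succ_interp : interp Gamma2S K :=
  expand_interp config_interp min_cases max_cases succ_cases.

Lemma qf_config_interp : qf_interp config_interp.
Proof.
split=> [|r|[]] //.
  rewrite /= /tuple_domf qfree_big_and all_map; apply/allP => j _ /=.
  by rewrite /digit_dom; case: ifP => _ //; apply: qfree_is_code_lt.
rewrite /= /edge_formula qfree_big_or all_map; apply/allP => z _ /=.
by rewrite qfree_big_and all_map; apply/allP => i _ /=; rewrite qfree_reads qfree_moves.
Qed.

Lemma qf_config_succ_interp : qf_interp config_succ_interp.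
Proof.
have [Hdom Hrel _] := qf_config_interp.
split=> // -[] //; rewrite all_map; apply/allP => -[[j s]|] _ /=.
  by rewrite qfree_succ_case qfree_big_and all_map; apply/allP.
by rewrite qfree_big_and all_map; apply/allP.
Qed.

End ConfigInterp.

Section ConfigTuples.
Variables (Sigma : finType) (M : nmfa Sigma) (n : nat) (x : n.+1.-tuple Sigma).
Hypothesis q_le_n : #|state M| <= n.
Local Notation K := (SigmaSig Sigma).
Local Notation A := (string_struct x).
Local Notation h := (heads M).
Local Notation kk := (slot_arity M).
Local Notation rs := (config_radices M n).
Local Notation ktuple := {ffun 'I_kk -> 'I_n.+1}.
Local Notation digits_config := (digits_config M n).
Local Notation I := (idomT (config_interp M) A).
Local Notation X1 := (fun i : 'I_kk => TVar (ord0, i) : term K ('I_1 * 'I_kk)).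

Lemma n_gt0 : 0 < n.
Proof. exact: leq_trans (card_state_gt0 M) q_le_n. Qed.

Lemma radix_le (j : 'I_h.+1) : nth 0 rs j <= n.+3.
Proof. by rewrite nth_config_radices //; case: ifP => _; lia. Qed.

Lemma nth_digit_lt ds (j : 'I_h.+1) : all2 ltn ds rs -> nth 0 ds j < nth 0 rs j.
Proof. by case/(all2_nthP 0 0) => _; apply; rewrite size_config_radices. Qed.

Lemma digit_lt ds (j : 'I_h.+1) : all2 ltn ds rs -> nth 0 ds j < n.+3.
Proof. by move/(nth_digit_lt j)/leq_trans; apply; apply: radix_le. Qed.

Definition slot_pair (t : ktuple) (j : 'I_h.+1) : nat * nat :=
  (val (t (slot j false)), val (t (slot j true))).

Definition tuple_digits (t : ktuple) : seq nat :=
  [seq pos_decode n (slot_pair t j) | j <- enum 'I_h.+1].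

Definition digits_tuple (ds : seq nat) : ktuple :=
  [ffun i : 'I_kk => let: (j, b) := enum_val i in inord (pair_proj b (pos_code n (nth 0 ds j)))].

Definition tuple_dom (t : ktuple) : Prop :=
  forall j : 'I_h.+1, exists2 p, p < nth 0 rs j & slot_pair t j = pos_code n p.

Lemma nth_tuple_digits t (j : 'I_h.+1) : nth 0 (tuple_digits t) j = pos_decode n (slot_pair t j).
Proof. by rewrite (nth_map j) ?size_enum_ord // nth_ord_enum. Qed.

Lemma tuple_dom_digits t : tuple_dom t ->
  all2 ltn (tuple_digits t) rs /\
  forall j : 'I_h.+1, slot_pair t j = pos_code n (nth 0 (tuple_digits t) j).
Proof.
move=> Ht; have Hd (j : 'I_h.+1) : exists2 p, p < nth 0 rs j &
    nth 0 (tuple_digits t) j = p /\ slot_pair t j = pos_code n p.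
  have [p Hp E] := Ht j; exists p => //.
  by rewrite nth_tuple_digits E (pos_codeK n_gt0) // (leq_trans Hp (radix_le j)).
split=> [|j]; last by have [p _ [-> ->]] := Hd j.
apply/(all2_nthP 0 0); rewrite size_map size_enum_ord size_config_radices; split=> // j Hj.
by have [p Hp [/= -> _]] := Hd (Ordinal Hj).
Qed.

Lemma digits_tuple_slot ds j b :
  digits_tuple ds (slot j b) = inord (pair_proj b (pos_code n (nth 0 ds j))).
Proof. by rewrite ffunE /slot enum_rankK. Qed.

Lemma slot_pair_digits_tuple ds (j : 'I_h.+1) : all2 ltn ds rs ->
  slot_pair (digits_tuple ds) j = pos_code n (nth 0 ds j).
Proof.
move=> V; rewrite /slot_pair !digits_tuple_slot /=.
by have [] := pos_code_le (digit_lt j V); case: (pos_code _ _) => u v /= Hu Hv; rewrite !inordK.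
Qed.

Lemma digits_tupleK ds : all2 ltn ds rs ->
  tuple_dom (digits_tuple ds) /\ tuple_digits (digits_tuple ds) = ds.
Proof.
move=> V; have [Hs _] := (all2_nthP 0 0).1 V; split.
  by move=> j; exists (nth 0 ds j); [exact: nth_digit_lt | exact: slot_pair_digits_tuple].
apply: (@eq_from_nth _ 0) => [|j]; first by rewrite size_map size_enum_ord Hs size_config_radices.
rewrite size_map size_enum_ord => Hj.
rewrite (nth_tuple_digits _ (Ordinal Hj)) slot_pair_digits_tuple //.
by rewrite (pos_codeK n_gt0) // digit_lt.
Qed.

Lemma slot_enum_val (i : 'I_kk) : slot (enum_val i).1 (enum_val i).2 = i.
Proof. by rewrite /slot -surjective_pairing enum_valK. Qed.

Lemma tuple_digitsK t : tuple_dom t -> digits_tuple (tuple_digits t) = t.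
Proof.
move=> /tuple_dom_digits [_ Ht]; apply/ffunP => i; rewrite -[i]slot_enum_val.
case: (enum_val i) => j b; rewrite digits_tuple_slot -Ht.
by case: b; apply: inord_val.
Qed.

Section Env.
Variables (V : Type) (e : V -> 'I_n.+1).

Lemma pair_val_slot_terms (X : 'I_kk -> term K V) (t : ktuple) j :
  (forall i, teval A (X i) e = t i) -> pair_val x e (slot_terms X j) = slot_pair t j.
Proof. by move=> Ht; rewrite /pair_val /term_val /= !Ht. Qed.

Lemma sat_digit_dom (j : 'I_h.+1) (a : term K V * term K V) :
  sat A (digit_dom j a) e <-> exists2 p, p < nth 0 rs j & pair_val x e a = pos_code n p.
Proof.
rewrite /digit_dom nth_config_radices //; case: ifP => _; last exact: sat_is_pos_code.
by apply: sat_is_code_lt; lia.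
Qed.

Lemma pair_val_max_digit (j : 'I_h.+1) : pair_val x e (max_digit j) = pos_code n (nth 0 rs j).-1.
Proof.
rewrite /max_digit nth_config_radices //; case: ifP => _; last exact: pair_val_max_max.
by apply: pair_val_tcode; lia.
Qed.

Lemma teval_digits_terms (f : 'I_h.+1 -> term K V * term K V) ds :
  all2 ltn ds rs -> (forall j, pair_val x e (f j) = pos_code n (nth 0 ds j)) ->
  forall i, teval A (digits_terms f i) e = digits_tuple ds i.
Proof.
move=> Vds Hf i; rewrite -[i]slot_enum_val; case: (enum_val i) => j b.
rewrite digits_tuple_slot /digits_terms /slot enum_rankK; apply: ord_inj.
have := pos_code_le (digit_lt j Vds); rewrite -Hf => -[H1 H2].
by rewrite inordK; case: b; rewrite ?ltnS.
Qed.

End Env.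

Lemma sat_tuple_domf (t : ktuple) : sat A (tuple_domf M) (fun i => t i) <-> tuple_dom t.
Proof.
rewrite sat_big_and; split=> [H j|H j _].
  by have /sat_digit_dom := H j (mem_enum _ j); rewrite (pair_val_slot_terms _ _ (t := t)).
by apply/sat_digit_dom; rewrite (pair_val_slot_terms _ _ (t := t)).
Qed.

Lemma tuple_dom_sval (t : I) : tuple_dom (sval t).
Proof. exact/sat_tuple_domf/(svalP t). Qed.

Definition tuple_config (t : I) : config M n := digits_config (tuple_digits (sval t)).

Definition config_tuple (c : config M n) : I :=
  exist _ (digits_tuple (config_digits c))
    ((sat_tuple_domf _).2 (digits_tupleK (config_digits_valid c)).1).

Lemma config_digits_tuple_config (t : I) : config_digits (tuple_config t) = tuple_digits (sval t).
Proof. by rewrite digits_configK //; case: (tuple_dom_digits (tuple_dom_sval t)). Qed.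

Lemma config_tupleK : cancel config_tuple tuple_config.
Proof.
move=> c; rewrite /tuple_config /= (digits_tupleK (config_digits_valid c)).2.
exact: config_digitsK.
Qed.

Lemma tuple_configK : cancel tuple_config config_tuple.
Proof.
move=> t; apply: eq_sig_hprop => [u|/=]; first exact: proof_irrelevance.
by rewrite config_digits_tuple_config tuple_digitsK //; apply: tuple_dom_sval.
Qed.

Lemma enum_rank_le_n (s : state M) : enum_rank s <= n.
Proof. by apply: leq_trans q_le_n; apply: ltnW. Qed.

Lemma sat_state_code V (e : V -> 'I_n.+1) (X : 'I_kk -> term K V) (c : config M n) s :
  (forall j, pair_val x e (slot_terms X j) = pos_code n (nth 0 (config_digits c) j)) ->
  sat A (FEq2 (slot_terms X ord0) (tcode (enum_rank s))) e <-> c.1 = s.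
Proof.
move=> H; rewrite (sat_FEq2_code n_gt0 (H ord0) (pair_val_tcode x e (enum_rank_le_n s))).
- by split=> [E|<-] //; apply/enum_rank_inj/val_inj.
- exact: (digit_lt ord0 (config_digits_valid c)).
- by have := enum_rank_le_n s; lia.
Qed.

Section Transition.
Variables (V : Type) (e : V -> 'I_n.+1) (X Y : 'I_kk -> term K V) (c c' : config M n).
Hypothesis HX : forall j, pair_val x e (slot_terms X j) = pos_code n (nth 0 (config_digits c) j).
Hypothesis HY : forall j, pair_val x e (slot_terms Y j) = pos_code n (nth 0 (config_digits c') j).

Lemma sat_head_formula z (i : 'I_h) :
  sat A (head_formula X Y z i) e <->
  tape_sym x (c.2 i) = z.1.2 i /\ (c'.2 i : nat) = step (c.2 i) (z.2.2 i).
Proof.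
have Hd (c0 : config M n) : nth 0 (config_digits c0) (lift ord0 i) = c0.2 i.
  by rewrite lift0 nth_config_digits.
have Hlt (c0 : config M n) := digit_lt (lift ord0 i) (config_digits_valid c0).
rewrite -(Hd c) -(Hd c') /=.
by rewrite (sat_reads n_gt0 _ (HX _) (Hlt c)) (sat_moves n_gt0 _ (HX _) (HY _) (Hlt c) (Hlt c')).
Qed.

Lemma sat_trans_formula (z : transition M) :
  sat A (trans_formula X Y z) e <->
  [/\ c.1 = z.1.1, c'.1 = z.2.1 &
      forall i, tape_sym x (c.2 i) = z.1.2 i /\ (c'.2 i : nat) = step (c.2 i) (z.2.2 i)].
Proof.
have Hheads : sat A (big_and [seq head_formula X Y z i | i <- enum 'I_h]) e <->
    forall i, tape_sym x (c.2 i) = z.1.2 i /\ (c'.2 i : nat) = step (c.2 i) (z.2.2 i).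
  rewrite sat_big_and; split=> [H i|H i _]; apply/sat_head_formula; last exact: H.
  by apply: H; rewrite mem_enum.
split=> [[/(sat_state_code _ HX) E1 [/(sat_state_code _ HY) E2 /Hheads H]] //|[E1 E2 H]].
split; first exact/(sat_state_code _ HX).
by split; [exact/(sat_state_code _ HY) | exact/Hheads].
Qed.

End Transition.

Lemma pair_val_tuple_env m (a : {ffun 'I_m -> I}) (k : 'I_m) j :
  pair_val x (tuple_env a) (slot_terms (fun i => TVar (k, i)) j) =
  pos_code n (nth 0 (config_digits (tuple_config (a k))) j).
Proof.
rewrite (pair_val_slot_terms (t := sval (a k))) // config_digits_tuple_config.
exact: (tuple_dom_digits (tuple_dom_sval (a k))).2.
Qed.

Lemma sat_edge_formula (a : {ffun 'I_2 -> I}) :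
  sat A (edge_formula M) (tuple_env a) <->
  cedge M x (tuple_config (a ord0)) (tuple_config (a ord_max)).
Proof.
have Hsat := sat_trans_formula (pair_val_tuple_env a ord0) (pair_val_tuple_env a ord_max).
rewrite sat_big_or; split=> [[z]|[m [Hd Hs]]].
  rewrite mem_enum inE => Hz /Hsat [E1 E2 H]; exists z.2.2; split=> [|i]; last exact: (H i).2.
  suff -> : [ffun i => tape_sym x ((tuple_config (a ord0)).2 i)] = z.1.2 by rewrite E1 E2.
  by apply/ffunP => i; rewrite ffunE (H i).1.
exists ((tuple_config (a ord0)).1, [ffun i => tape_sym x ((tuple_config (a ord0)).2 i)],
        ((tuple_config (a ord_max)).1, m)); first by rewrite mem_enum.
by apply/Hsat; split=> // i /=; split; [rewrite [RHS]ffunE | apply: Hs].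
Qed.

Lemma digit_max_lt (j : 'I_h.+1) : (nth 0 rs j).-1 < n.+3.
Proof. by have := radix_le j; lia. Qed.

Lemma max_digits_valid : all2 ltn (map predn rs) rs.
Proof.
apply/(all2_nthP 0 0); rewrite size_map; split=> // j.
rewrite size_config_radices => Hj.
by rewrite nth_map_predn (nth_config_radices n Hj); have := card_state_gt0 M; case: ifP; lia.
Qed.

Lemma min_digits_valid : all2 ltn (nseq h.+1 0) rs.
Proof.
apply/(all2_nthP 0 0); rewrite size_nseq size_config_radices; split=> // j Hj.
by rewrite nth_nseq Hj (nth_config_radices n Hj); have := card_state_gt0 M; case: ifP.
Qed.

Lemma const_cases_value (f : 'I_h.+1 -> term K ('I_0 * 'I_kk) * term K ('I_0 * 'I_kk)) ds
    (a : {ffun 'I_0 -> I}) :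
  all2 ltn ds rs -> (forall j, pair_val x (tuple_env a) (f j) = pos_code n (nth 0 ds j)) ->
  exists w : I, case_value A (const_cases f) (tuple_env a) (fun i => sval w i) /\
                tuple_config w = digits_config ds.
Proof.
move=> Vds Hf; exists (config_tuple (digits_config ds)); split; last exact: config_tupleK.
left; split=> // i; rewrite /= digits_configK //.
exact: teval_digits_terms.
Qed.

Definition config_min : config M n := digits_config (nseq h.+1 0).
Definition config_max : config M n := digits_config (map predn rs).
Definition config_succ (c : config M n) : config M n :=
  digits_config (radix_succ rs (config_digits c)).

Lemma state_const_value (s : state M) (a : {ffun 'I_0 -> I}) :
  exists w : I, case_value A (const_cases (state_const s)) (tuple_env a) (fun i => sval w i) /\
                tuple_config w = (s, [ffun _ => ord0]).
Proof.
pose c0 : config M n := (s, [ffun _ => ord0]).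
have Hf j : pair_val x (tuple_env a) (state_const s j) = pos_code n (nth 0 (config_digits c0) j).
  rewrite /state_const; case: (unliftP ord0 j) => [i ->|->]; last first.
    by rewrite /= pair_val_tcode // enum_rank_le_n.
  by rewrite lift0 nth_config_digits ffunE.
have [w [Hw Ew]] := const_cases_value (config_digits_valid c0) Hf.
by exists w; rewrite Ew config_digitsK.
Qed.

Lemma min_const_value (a : {ffun 'I_0 -> I}) :
  exists w : I, case_value A (min_cases M) (tuple_env a) (fun i => sval w i) /\
                tuple_config w = config_min.
Proof.
apply: const_cases_value => [|j]; first exact: min_digits_valid.
by rewrite nth_nseq if_same.
Qed.

Lemma max_const_value (a : {ffun 'I_0 -> I}) :
  exists w : I, case_value A (max_cases M) (tuple_env a) (fun i => sval w i) /\
                tuple_config w = config_max.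
Proof.
apply: const_cases_value => [|j]; first exact: max_digits_valid.
by rewrite pair_val_max_digit // nth_map_predn.
Qed.

Section Successor.
Variable a : {ffun 'I_1 -> I}.
Local Notation c := (tuple_config (a ord0)).
Local Notation ds := (config_digits c).
Local Notation e := (tuple_env a).

Lemma sat_max_digit (j : 'I_h.+1) :
  sat A (FEq2 (slot_terms X1 j) (max_digit j)) e <-> nth 0 ds j = (nth 0 rs j).-1.
Proof.
exact: (sat_FEq2_code n_gt0 (pair_val_tuple_env a ord0 j) (pair_val_max_digit _ _)
          (digit_lt j (config_digits_valid c)) (digit_max_lt j)).
Qed.

Lemma sat_succ_at_max : sat A (succ_at_max M).1 e <-> ds = map predn rs.
Proof.
rewrite sat_big_and eq_map_prednP; last exact: ((all2_nthP 0 0).1 (config_digits_valid c)).1.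
rewrite size_config_radices; split=> [H j Hj|H j _].
  by apply/(sat_max_digit (Ordinal Hj)); apply: H; rewrite mem_enum.
by apply/sat_max_digit; apply: H.
Qed.

Lemma sat_succ_at (j : 'I_h.+1) s :
  sat A (succ_at j s).1 e <->
  [/\ sat A (succ_case s (slot_terms X1 j)).1 e, nth 0 ds j != (nth 0 rs j).-1 &
      forall i, j < i < size rs -> nth 0 ds i = (nth 0 rs i).-1].
Proof.
have Hmax : sat A (big_and [seq FEq2 (slot_terms X1 j') (max_digit j')
                           | j' : 'I_h.+1 <- enum 'I_h.+1 & j < j']) e <->
            forall i, j < i < size rs -> nth 0 ds i = (nth 0 rs i).-1.
  rewrite sat_big_and size_config_radices; split=> [H i /andP[ji ih]|H j'].
    by apply/(sat_max_digit (Ordinal ih)); apply: H; rewrite mem_filter mem_enum ji.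
  by rewrite mem_filter mem_enum andbT => ji; apply/sat_max_digit; apply: H; rewrite ji /=.
split=> [[Hc [Hn /Hmax Hm]]|[Hc /eqP Hn Hm]].
  by split=> //; apply/eqP => /sat_max_digit.
by split=> //; split; [move/sat_max_digit | apply/Hmax].
Qed.

Lemma succ_at_value (j : 'I_h.+1) s : sat A (succ_at j s).1 e ->
  forall i, teval A ((succ_at j s).2 i) e = digits_tuple (radix_succ rs ds) i.
Proof.
case/sat_succ_at => Hc Hn Hm; rewrite /succ_at; apply: teval_digits_terms => [|j'].
  exact: radix_succ_digits (config_digits_valid c).
rewrite (nth_radix_succ (config_digits_valid c) _ Hn Hm) ?size_config_radices //.
case: ltnP => [lt_j'j|le_jj']; first exact: pair_val_tuple_env.
case: eqP => _; last exact: pair_val_min_max.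
have Hj := digit_lt j (config_digits_valid c).
by case: (succ_case_val n_gt0 (pair_val_tuple_env a ord0 j) Hj Hc).
Qed.

Lemma succ_case_applies : exists2 z, z \in succ_index M & sat A (succ_case_of z).1 e.
Proof.
have [Emax|Hne] := eqVneq ds (map predn rs).
  by exists None; [exact: mem_head | exact/sat_succ_at_max].
have Hs : size ds = size rs := ((all2_nthP 0 0).1 (config_digits_valid c)).1.
have [j Hj [Hn Hm]] := last_nonmax_digit Hs Hne.
move: Hj; rewrite size_config_radices => Hj.
have Hlt : nth 0 ds (Ordinal Hj) < n.+2.
  have := nth_digit_lt (Ordinal Hj) (config_digits_valid c); have := radix_le (Ordinal Hj).
  by move: Hn => /eqP /=; lia.
have [s Hs3 Hsat] := succ_case_total n_gt0 (pair_val_tuple_env a ord0 (Ordinal Hj)) Hlt.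
exists (Some (Ordinal Hj, s)); last exact/sat_succ_at.
rewrite inE; apply/orP; right; apply/allpairsP.
by exists (Ordinal Hj, s); rewrite mem_enum mem_iota.
Qed.

Lemma succ_cases_value :
  exists w : I, case_value A (succ_cases M) e (fun i => sval w i) /\
                tuple_config w = config_succ c.
Proof.
exists (config_tuple (config_succ c)); split; last exact: config_tupleK.
have Hw : sval (config_tuple (config_succ c)) = digits_tuple (radix_succ rs ds).
  by rewrite /= digits_configK //; apply: radix_succ_digits (config_digits_valid c).
apply: case_value_map => [|[[j s]|] _ Hsat i]; rewrite ?Hw; first exact: succ_case_applies.
  exact: succ_at_value.
have Emax := sat_succ_at_max.1 Hsat; rewrite Emax radix_succ_max -Emax.
by rewrite config_digits_tuple_config tuple_digitsK //; apply: tuple_dom_sval.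
Qed.

End Successor.

(** * The successor expansion of the configuration graph *)

Definition config_struct : structure Gamma2S :=
  @MkStruct Gamma2S (config M n)
    (fun _ (a : {ffun 'I_2 -> config M n}) => cedge M x (a ord0) (a ord_max))
    (fun f => match f return {ffun 'I_(G2S_ar f) -> config M n} -> config M n with
              | GSs => fun _ => (q_start M, [ffun _ => ord0])
              | GSt => fun _ => (q_acc M, [ffun _ => ord0])
              | GSmin => fun _ => config_min
              | GSmax => fun _ => config_max
              | GSsucc => fun a => config_succ (a ord0)
              end).

Lemma reduct_config_struct : struct_iso (reduct config_struct) (config_graph M x).
Proof. by exists id; split=> [|r a|[]] //; [exists id | rewrite /= !ffunE]. Qed.

Definition config_rank (c : config M n) : nat := radix_value rs (config_digits c).

Lemma config_rank_inj : injective config_rank.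
Proof.
move=> c c' /radix_value_inj E; apply: (can_inj (@config_digitsK _ M n)).
by apply: E; rewrite inE config_digits_valid.
Qed.

Lemma config_rank_lt c : config_rank c < \prod_(r <- rs) r.
Proof. exact/radix_value_lt/config_digits_valid. Qed.

Lemma config_rank_min : config_rank config_min = 0.
Proof. by rewrite /config_rank digits_configK ?radix_value_nseq0 // min_digits_valid. Qed.

Lemma config_rank_max : config_rank config_max = (\prod_(r <- rs) r).-1.
Proof.
rewrite /config_rank digits_configK ?max_digits_valid // radix_value_max //.
by have := radix_value_lt max_digits_valid; lia.
Qed.

Lemma config_rank_succ c : c != config_max -> config_rank (config_succ c) = (config_rank c).+1.
Proof.
move=> Hc; rewrite /config_rank /config_succ.
rewrite digits_configK ?radix_succ_digits ?config_digits_valid //.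
apply: radix_value_succ; first exact: config_digits_valid.
by apply: contra_neq Hc => E; rewrite -[c]config_digitsK E.
Qed.

Lemma config_succ_max : config_succ config_max = config_max.
Proof. by rewrite /config_succ digits_configK ?max_digits_valid // radix_succ_max. Qed.

Lemma config_struct_succ_expansion : is_succ_expansion config_struct.
Proof.
have ES b : fun_i config_struct GSsucc [ffun _ : 'I_1 => b] = config_succ b by rewrite /= ffunE.
exists (fun c c' => config_rank c < config_rank c'); split; [split|split; [|split; [|split]]].
- by move=> c; rewrite ltnn.
- by move=> c c' c''; apply: ltn_trans.
- move=> c c' Hc; case: (ltngtP (config_rank c) (config_rank c')) => H; [by left|by right|].
  by case: Hc; apply: config_rank_inj.
- move=> c Hc; rewrite /= config_rank_min lt0n; apply/eqP => E.
  by apply: Hc; apply: config_rank_inj; rewrite E config_rank_min.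
- move=> c Hc; rewrite /= config_rank_max; have := config_rank_lt c.
  suff : config_rank c <> (\prod_(r <- rs) r).-1 by lia.
  by move=> E; apply: Hc; apply: config_rank_inj; rewrite E config_rank_max.
- move=> c Hc; rewrite ES config_rank_succ; last exact/eqP.
  by split=> // c' [H1 H2]; lia.
- by rewrite ES config_succ_max.
Qed.

Lemma config_interp_iso : interp_iso (config_interp M) A (config_graph M x).
Proof.
exists tuple_config; split.
- exact: (Bijective tuple_configK config_tupleK).
- by move=> r a; apply: iff_trans (sat_edge_formula a) _; rewrite /= !ffunE.
case=> a.
- by have [w [Hw Ew]] := state_const_value (q_start M) a; exists w; rewrite Ew.
- by have [w [Hw Ew]] := state_const_value (q_acc M) a; exists w; rewrite Ew.
Qed.

Lemma config_succ_interp_iso : interp_iso (config_succ_interp M) A config_struct.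
Proof.
exists tuple_config; split.
- exact: (Bijective tuple_configK config_tupleK).
- by move=> r a; apply: iff_trans (sat_edge_formula a) _; rewrite /= !ffunE.
case=> a.
- by have [w [Hw Ew]] := state_const_value (q_start M) a; exists w; rewrite Ew.
- by have [w [Hw Ew]] := state_const_value (q_acc M) a; exists w; rewrite Ew.
- exact: min_const_value a.
- exact: max_const_value a.
- by have [w [Hw Ew]] := succ_cases_value a; exists w; rewrite Ew /= ffunE.
Qed.

End ConfigTuples.

Theorem theorem2 (Sigma : finType) (M : nmfa Sigma) :
  nmfa_wf M ->
  exists pi : interp Gamma2 (SigmaSig Sigma),
    (* pi is quantifier-free *)
    qf_interp pi /\
    (* x^pi is isomorphic to the configuration graph, for long x *)
    (exists N : nat, forall (n : nat) (x : n.+1.-tuple Sigma),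
       N <= n.+1 -> interp_iso pi (string_struct x) (config_graph M x)) /\
    (* pi expands to a quantifier-free (Gamma_2,S)-interpretation whose
       x^pi is a successor expansion of the configuration graph *)
    (exists (cmin cmax : fcases (SigmaSig Sigma) 0 (iar pi))
            (cS : fcases (SigmaSig Sigma) 1 (iar pi)),
       qf_interp (expand_interp pi cmin cmax cS) /\
       exists N : nat, forall (n : nat) (x : n.+1.-tuple Sigma),
         N <= n.+1 ->
         exists B : structure Gamma2S,
           [/\ struct_iso (reduct B) (config_graph M x),
               is_succ_expansion B &
               interp_iso (expand_interp pi cmin cmax cS) (string_struct x) B]).
Proof.
(* The configuration graph contains all configurations, reachable or not. *)
move=> _; exists (config_interp M); split; first exact: qf_config_interp.
split; first by exists #|state M|.+1 => n x; exact: config_interp_iso.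
exists (min_cases M), (max_cases M), (succ_cases M); split; first exact: qf_config_succ_interp.
exists #|state M|.+1 => n x q_le_n; exists (@config_struct _ M n x); split.
- exact: reduct_config_struct.
- exact: config_struct_succ_expansion.
- exact: config_succ_interp_iso.
Qed.
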